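(* Let $\mathcal{N}$ be an exact category, let $k\ge 1$, and let $\mathbb{P}=(P_*,d,d')$ be a binary acyclic complex in $\mathcal{N}$ supported on $[0,k]$. Let $\mathrm{sw}(\mathbb{P})=(P_*,d',d)$ be the binary acyclic complex obtained by switching top and bottom differential. Then $\mathrm{sw}(\mathbb{P})=-\mathbb{P}$ in $L_1^k(\mathcal{N})$.
   Context: A binary acyclic complex $\mathbb{P}=(P_*,d,d')$ in $\mathcal{N}$ is a graded object $P_*$ of $\mathcal{N}$ supported on a finite subset of $[0,\infty)$, together with two degree $-1$ maps $d,d'$ (top and bottom differentials) such that both $\mathbb{P}^\top=(P_*,d)$ and $\mathbb{P}^\bot=(P_*,d')$ are acyclic chain complexes (each differential $P_n\to P_{n-1}$ factors as an admissible epimorphism $P_n\twoheadrightarrow J_{n-1}$ followed by an admissible monomorphism $J_{n-1}\rightarrowtail P_{n-1}$ with $J_n\rightarrowtail P_n\twoheadrightarrow J_{n-1}$ short exact for all $n$). It is diagonal if $d=d'$. Morphisms are degree-$0$ maps that are chain maps for both differentials; with degreewise short exact sequences these form an exact category. For $k\ge0$, $B_1^k(\mathcal{N})$ is the Grothendieck group of the exact category of binary acyclic complexes supported on $[0,k]$, and $K_1^k(\mathcal{N})$ is its quotient by classes of diagonal complexes. For isomorphisms $\alpha,\beta\colon P\to Q$, $\langle\alpha,\beta\rangle$ is the class of the binary complex with $P$ in degree $1$, $Q$ in degree $0$, top differential $\alpha$, bottom differential $\beta$. A binary ladder is $(\mathbb{P},\mathbb{Q},\sigma,\tau)$ with $\sigma\colon\mathbb{P}^\top\to\mathbb{Q}^\top$,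 $\tau\colon\mathbb{P}^\bot\to\mathbb{Q}^\bot$ chain isomorphisms. For $k\ge1$, $L_1^k(\mathcal{N})$ is the quotient of $K_1^k(\mathcal{N})$ by the relations $\mathbb{Q}-\mathbb{P}=\sum_{i=0}^k(-1)^i\langle\sigma_i,\tau_i\rangle$ for all binary ladders with $\mathbb{P},\mathbb{Q}$ supported on $[0,k]$, $P_i=Q_i$ for all $i$, and all $\sigma_i,\tau_i$ involutions. *)

(* Exact categories, binary acyclic complexes and the group
   L_1^k, encoded via the universal property of the Grothendieck group. *)
From HB Require Import structures.
From mathcomp Require Import all_boot all_order all_algebra.
Set Implicit Arguments. Unset Strict Implicit. Unset Printing Implicit Defensive.
Import GRing.Theory.
Local Open Scope ring_scope.

Record additiveCat := AdditiveCat {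
  Obj :> Type;
  Hom : Obj -> Obj -> zmodType;
  idm : forall A, Hom A A;
  comp : forall A B C, Hom B C -> Hom A B -> Hom A C;
  compA : forall A B C D (h : Hom C D) (g : Hom B C) (f : Hom A B),
    comp h (comp g f) = comp (comp h g) f;
  comp1m : forall A B (f : Hom A B), comp (idm B) f = f;
  compm1 : forall A B (f : Hom A B), comp f (idm A) = f;
  compDl : forall A B C (g1 g2 : Hom B C) (f : Hom A B),
    comp (g1 + g2) f = comp g1 f + comp g2 f;
  compDr : forall A B C (g : Hom B C) (f1 f2 : Hom A B),
    comp g (f1 + f2) = comp g f1 + comp g f2;
  zobj : Obj;
  zobj_zero : idm zobj = 0;
  biprod : forall A B : Obj, exists (S : Obj) (i1 : Hom A S) (i2 : Hom B S)
    (p1 : Hom S A) (p2 : Hom S B),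
    [/\ comp p1 i1 = idm A, comp p2 i2 = idm B &
        comp i1 p1 + comp i2 p2 = idm S]
}.
Arguments comp {a A B C}.
Arguments idm {a}.
Arguments zobj {a}.

Section CatDefs.
Variable C : additiveCat.

Definition is_zero (X : C) : Prop := idm X = 0.

Definition is_iso (A B : C) (f : Hom A B) : Prop :=
  exists g : Hom B A, comp g f = idm A /\ comp f g = idm B.

Definition is_kernel (A B D : C) (i : Hom A B) (p : Hom B D) : Prop :=
  comp p i = 0 /\
  forall (X : C) (f : Hom X B), comp p f = 0 -> exists! g : Hom X A, comp i g = f.
Definition is_cokernel (A B D : C) (i : Hom A B) (p : Hom B D) : Prop :=
  comp p i = 0 /\
  forall (X : C) (f : Hom B X), comp f i = 0 -> exists! g : Hom D X, comp g p = f.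

Definition is_pushout (A B A' B' : C) (i : Hom A B) (f : Hom A A')
  (i' : Hom A' B') (f' : Hom B B') : Prop :=
  comp f' i = comp i' f /\
  forall (X : C) (u : Hom B X) (v : Hom A' X), comp u i = comp v f ->
    exists! w : Hom B' X, comp w f' = u /\ comp w i' = v.

Definition is_pullback (B D D' B' : C) (p : Hom B D) (g : Hom D' D)
  (p' : Hom B' D') (g' : Hom B' B) : Prop :=
  comp p g' = comp g p' /\
  forall (X : C) (u : Hom X B) (v : Hom X D'), comp p u = comp g v ->
    exists! w : Hom X B', comp g' w = u /\ comp p' w = v.
End CatDefs.

Record exactCat := ExactCat {
  ecat :> additiveCat;
  Ex : forall A B D : ecat, Hom A B -> Hom B D -> Prop;
  Ex_kercoker : forall A B D (i : Hom A B) (p : Hom B D),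
    Ex i p -> is_kernel i p /\ is_cokernel i p;
  Ex_iso : forall A B D A' B' D' (i : Hom A B) (p : Hom B D)
    (i' : Hom A' B') (p' : Hom B' D') (a : Hom A A') (b : Hom B B') (c : Hom D D'),
    Ex i p -> is_iso a -> is_iso b -> is_iso c ->
    comp b i = comp i' a -> comp c p = comp p' b -> Ex i' p';
  Ex_E0 : forall A : ecat, exists (D : ecat) (p : Hom A D), Ex (idm A) p;
  Ex_E0op : forall A : ecat, exists (D : ecat) (i : Hom D A), Ex i (idm A);
  Ex_E1 : forall A B D (i : Hom A B) (j : Hom B D),
    (exists (X : ecat) (p : Hom B X), Ex i p) ->
    (exists (X : ecat) (q : Hom D X), Ex j q) ->
    exists (X : ecat) (r : Hom D X), Ex (comp j i) r;
  Ex_E1op : forall B D D' (p : Hom B D) (q : Hom D D'),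
    (exists (X : ecat) (i : Hom X B), Ex i p) ->
    (exists (X : ecat) (j : Hom X D), Ex j q) ->
    exists (X : ecat) (s : Hom X B), Ex s (comp q p);
  Ex_E2 : forall A B A' (i : Hom A B) (f : Hom A A'),
    (exists (X : ecat) (p : Hom B X), Ex i p) ->
    exists (B' : ecat) (i' : Hom A' B') (f' : Hom B B'),
      is_pushout i f i' f' /\ exists (X : ecat) (p' : Hom B' X), Ex i' p';
  Ex_E2op : forall B D D' (p : Hom B D) (g : Hom D' D),
    (exists (X : ecat) (i : Hom X B), Ex i p) ->
    exists (B' : ecat) (p' : Hom B' D') (g' : Hom B' B),
      is_pullback p g p' g' /\ exists (X : ecat) (i' : Hom X B'), Ex i' p'
}.
Arguments Ex {e A B D}.

Section Binary.
Variable N : exactCat.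

Definition diffs (G : nat -> N) := forall n, Hom (G n.+1) (G n).

Record gcx := Gcx { gobj : nat -> N; dtop : diffs gobj; dbot : diffs gobj }.

Definition supported_on (k : nat) (G : nat -> N) : Prop :=
  forall n : nat, (k < n)%N -> is_zero (G n).

(* (G, d) is acyclic: d_n : G_{n+1} -> G_n factors as
   G_{n+1} ->> J_{n+1} >-> G_n with J_{n+1} >-> G_n ->> J_n short exact for
   all n; J_0 plays the role of J_{-1}, a subobject of G_{-1} = 0. *)
Definition acyclic (G : nat -> N) (d : diffs G) : Prop :=
  exists (J : nat -> N) (e : forall n, Hom (G n) (J n))
         (m : forall n, Hom (J n.+1) (G n)),
    [/\ is_zero (J 0),
        forall n, d n = comp (m n) (e n.+1) &
        forall n, Ex (m n) (e n)].

Definition bac (k : nat) (X : gcx) : Prop :=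
  [/\ supported_on k (gobj X), acyclic (dtop X) & acyclic (dbot X)].

Definition is_chain (G H : nat -> N) (dG : diffs G) (dH : diffs H)
  (s : forall n, Hom (G n) (H n)) : Prop :=
  forall n, comp (dH n) (s n.+1) = comp (s n) (dG n).

Definition is_bmor (X Y : gcx) (s : forall n, Hom (gobj X n) (gobj Y n)) : Prop :=
  is_chain (dtop X) (dtop Y) s /\ is_chain (dbot X) (dbot Y) s.

Definition is_diagonal (X : gcx) : Prop := forall n, dtop X n = dbot X n.

Definition sw (X : gcx) : gcx := Gcx (dbot X) (dtop X).

Definition pobj (A B : N) (n : nat) : N :=
  match n with 0 => B | 1 => A | _ => zobj end.
Definition pdiff (A B : N) (a : Hom A B) : diffs (pobj A B) :=
  fun n => match n return Hom (pobj A B n.+1) (pobj A B n) with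
           | 0 => a | _.+1 => 0 end.
Definition bpair (A B : N) (a b : Hom A B) : gcx :=
  Gcx (pdiff a) (pdiff b).

(* A function f from binary complexes to an abelian group V that induces a
   homomorphism on L_1^k: it is additive on (degreewise) short exact
   sequences of binary acyclic complexes supported on [0,k] (B_1^k), kills
   diagonal ones (K_1^k) and satisfies the ladder relations (L_1^k).
   Values of f on non-acyclic data are irrelevant. *)
Definition B1_hom (V : zmodType) (k : nat) (f : gcx -> V) : Prop :=
  forall (X Y Z : gcx) (i : forall n, Hom (gobj X n) (gobj Y n))
         (p : forall n, Hom (gobj Y n) (gobj Z n)),
    bac k X -> bac k Y -> bac k Z -> is_bmor i -> is_bmor p ->
    (forall n, Ex (i n) (p n)) -> f Y = f X + f Z.

Definition K1_hom (V : zmodType) (k : nat) (f : gcx -> V) : Prop :=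
  B1_hom k f /\ forall X, bac k X -> is_diagonal X -> f X = 0.

Definition is_involution (A : N) (s : Hom A A) : Prop := comp s s = idm A.

Definition L1_hom (V : zmodType) (k : nat) (f : gcx -> V) : Prop :=
  K1_hom k f /\
  forall (G : nat -> N) (d1 d1' d2 d2' : diffs G) (s t : forall n, Hom (G n) (G n)),
    bac k (Gcx d1 d1') -> bac k (Gcx d2 d2') ->
    (forall n, is_involution (s n)) -> (forall n, is_involution (t n)) ->
    is_chain d1 d2 s -> is_chain d1' d2' t ->
    f (Gcx d2 d2') - f (Gcx d1 d1') =
      \sum_(i < k.+1) (if odd i then - f (bpair (s i) (t i))
                       else f (bpair (s i) (t i))).
End Binary.

From mathcomp Require Import all_boot all_order all_algebra.
From Stdlib Require Import IndefiniteDescription.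
Set Implicit Arguments. Unset Strict Implicit. Unset Printing Implicit Defensive.
Import GRing.Theory.
Local Open Scope ring_scope.

(* For differentials a, b on G let a (+) b be their direct sum
   on G (+) G.  The swap of the two summands is an involutive chain
   isomorphism (a (+) b) -> (b (+) a), and the identity is one for any bottom
   differential c, so the ladder relation says that
   f(b (+) a, c) - f(a (+) b, c) does not depend on c.  With P = (d, d'),
   taking c = d' (+) d (where (d' (+) d, c) is diagonal) and c = d (+) d,
   and using additivity of f on direct sums, gives
   0 - (f(P) + f(sw P)) = (f(sw P) + f(d, d)) - (f(d, d) + f(sw P)) = 0.
   Additivity holds because split sequences and direct sums of conflations
   are conflations. *)

Lemma exists_unique_eq (T : Type) (P : T -> Prop) (x y : T) :
  (exists! z, P z) -> P x -> P y -> x = y.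
Proof. by case=> z [_ U] px py; rewrite -(U x px) (U y py). Qed.

Section ExactCategory.
Variable N : exactCat.

Lemma comp0m (A B C : N) (f : Hom A B) : comp (0 : Hom B C) f = 0.
Proof. by apply: (@addrI _ (comp (0 : Hom B C) f)); rewrite -compDl !addr0. Qed.

Lemma compm0 (A B C : N) (g : Hom B C) : comp g (0 : Hom A B) = 0.
Proof. by apply: (@addrI _ (comp g (0 : Hom A B))); rewrite -compDr !addr0. Qed.

Lemma hom_from_zero (Z Y : N) (h : Hom Z Y) : is_zero Z -> h = 0.
Proof. by move=> hZ; rewrite -[h]compm1 hZ compm0. Qed.

Lemma hom_to_zero (Z Y : N) (h : Hom Y Z) : is_zero Z -> h = 0.
Proof. by move=> hZ; rewrite -[h]comp1m hZ comp0m. Qed.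

Lemma iso_idm (A : N) : is_iso (idm A).
Proof. by exists (idm A); rewrite comp1m. Qed.

Record biprod_on (A B : N) := BiprodOn {
  bsum : N;
  bin1 : Hom A bsum; bin2 : Hom B bsum;
  bpr1 : Hom bsum A; bpr2 : Hom bsum B;
  bpr1_in1 : comp bpr1 bin1 = idm A;
  bpr2_in2 : comp bpr2 bin2 = idm B;
  bin_pr_sum : comp bin1 bpr1 + comp bin2 bpr2 = idm bsum }.

Definition chosen_biprod (A B : N) : biprod_on A B.
Proof.
case: (constructive_indefinite_description _ (biprod A B)) => S HS.
case: (constructive_indefinite_description _ HS) => i1 H1.
case: (constructive_indefinite_description _ H1) => i2 H2.
case: (constructive_indefinite_description _ H2) => p1 H3.
case: (constructive_indefinite_description _ H3) => p2 [h1 h2 h3].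
exact: (BiprodOn h1 h2 h3).
Defined.

Section Biproduct.
Variables (A B : N) (X : biprod_on A B).

Lemma bpr1_in2 : comp (bpr1 X) (bin2 X) = 0.
Proof.
have E := congr1 (fun g => comp g (bin2 X)) (bin_pr_sum X).
rewrite /= compDl comp1m -!compA bpr2_in2 compm1 -[RHS]add0r in E.
by rewrite -[LHS]comp1m -(bpr1_in1 X) -compA (addIr _ E) compm0.
Qed.

Lemma bpr2_in1 : comp (bpr2 X) (bin1 X) = 0.
Proof.
have E := congr1 (fun g => comp g (bin1 X)) (bin_pr_sum X).
rewrite /= compDl comp1m -!compA bpr1_in1 compm1 -[RHS]addr0 in E.
by rewrite -[LHS]comp1m -(bpr2_in2 X) -compA (addrI _ E) compm0.
Qed.

Lemma bpr1_in1A (Y : N) (f : Hom Y A) : comp (bpr1 X) (comp (bin1 X) f) = f.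
Proof. by rewrite compA bpr1_in1 comp1m. Qed.

Lemma bpr2_in2A (Y : N) (f : Hom Y B) : comp (bpr2 X) (comp (bin2 X) f) = f.
Proof. by rewrite compA bpr2_in2 comp1m. Qed.

Lemma bpr1_in2A (Y : N) (f : Hom Y B) : comp (bpr1 X) (comp (bin2 X) f) = 0.
Proof. by rewrite compA bpr1_in2 comp0m. Qed.

Lemma bpr2_in1A (Y : N) (f : Hom Y A) : comp (bpr2 X) (comp (bin1 X) f) = 0.
Proof. by rewrite compA bpr2_in1 comp0m. Qed.

Lemma bsum_hom_ext (Y : N) (f g : Hom (bsum X) Y) :
  comp f (bin1 X) = comp g (bin1 X) -> comp f (bin2 X) = comp g (bin2 X) -> f = g.
Proof.
by move=> h1 h2; rewrite -[f]compm1 -[g]compm1 -(bin_pr_sum X) !compDr !compA h1 h2.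
Qed.

Lemma bsum_zero : is_zero A -> is_zero B -> is_zero (bsum X).
Proof.
move=> hA hB; rewrite /is_zero -(bin_pr_sum X).
by rewrite (hom_to_zero (bpr1 X) hA) (hom_to_zero (bpr2 X) hB) !compm0 addr0.
Qed.

Definition bflip : biprod_on B A :=
  BiprodOn (bpr2_in2 X) (bpr1_in1 X) (etrans (addrC _ _) (bin_pr_sum X)).

End Biproduct.

Ltac bsimp := repeat progress (rewrite ?compDl ?compDr -?compA
  ?bpr1_in1 ?bpr2_in2 ?bpr1_in2 ?bpr2_in1
  ?bpr1_in1A ?bpr2_in2A ?bpr1_in2A ?bpr2_in1A
  ?compm1 ?comp1m ?comp0m ?compm0 ?addr0 ?add0r /=).

Definition bmap (A B C D : N) (X : biprod_on A B) (Y : biprod_on C D)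
  (a : Hom A C) (b : Hom B D) : Hom (bsum X) (bsum Y) :=
  comp (bin1 Y) (comp a (bpr1 X)) + comp (bin2 Y) (comp b (bpr2 X)).

Section BiproductMap.
Variables (A B C D : N) (X : biprod_on A B) (Y : biprod_on C D).
Variables (a : Hom A C) (b : Hom B D).

Lemma bmap_in1 : comp (bmap X Y a b) (bin1 X) = comp (bin1 Y) a.
Proof. by rewrite /bmap; bsimp. Qed.

Lemma bmap_in2 : comp (bmap X Y a b) (bin2 X) = comp (bin2 Y) b.
Proof. by rewrite /bmap; bsimp. Qed.

Lemma bpr2_bmap : comp (bpr2 Y) (bmap X Y a b) = comp b (bpr2 X).
Proof. by rewrite /bmap; bsimp. Qed.

Lemma bmap_flip : bmap (bflip X) (bflip Y) b a = bmap X Y a b.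
Proof. by rewrite /bmap /= addrC. Qed.

Lemma bmap_comp (E F : N) (Z : biprod_on E F) (c : Hom C E) (e : Hom D F) :
  comp (bmap Y Z c e) (bmap X Y a b) = bmap X Z (comp c a) (comp e b).
Proof. by rewrite /bmap; bsimp. Qed.

End BiproductMap.

Definition bswap (A : N) (X : biprod_on A A) : Hom (bsum X) (bsum X) :=
  comp (bin1 X) (bpr2 X) + comp (bin2 X) (bpr1 X).

Lemma bswap_invol (A : N) (X : biprod_on A A) : is_involution (bswap X).
Proof. by rewrite /is_involution /bswap; bsimp; rewrite bin_pr_sum. Qed.

Lemma bswap_bmap (A C : N) (X : biprod_on A A) (Y : biprod_on C C) (a b : Hom A C) :
  comp (bswap Y) (bmap X Y a b) = comp (bmap X Y b a) (bswap X).
Proof. by rewrite /bswap /bmap; bsimp. Qed.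

Definition adm_mono (A B : N) (i : Hom A B) : Prop := exists X (p : Hom B X), Ex i p.

Lemma Ex_idm_ker_zero (D B : N) (i : Hom D B) : Ex i (idm B) -> is_zero D.
Proof.
move=> /Ex_kercoker [[hi hu] _]; rewrite comp1m in hi.
have U := hu D 0 (compm0 _ _).
by apply: (exists_unique_eq U); rewrite ?compm1 ?compm0.
Qed.

(* Axiom E2 provides one pushout along which i' is admissible; any other
   pushout is isomorphic to it. *)
Lemma adm_mono_pushout (A B A' B' : N) (i : Hom A B) (f : Hom A A')
  (i' : Hom A' B') (f' : Hom B B') :
  adm_mono i -> is_pushout i f i' f' -> adm_mono i'.
Proof.
move=> hi [hc hu].
have [B'' [i'' [f'' [[hc'' hu''] [X [p hp]]]]]] := Ex_E2 f hi.
have [w [[w1 w2] _]] := hu'' B' f' i' hc.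
have [w' [[w1' w2'] _]] := hu B'' f'' i'' hc''.
have ww' : comp w' w = idm B''.
  by apply: (exists_unique_eq (hu'' B'' f'' i'' hc'')); rewrite ?comp1m -?compA
    ?w1 ?w2 ?w1' ?w2'.
have w'w : comp w w' = idm B'.
  by apply: (exists_unique_eq (hu B' f' i' hc)); rewrite ?comp1m -?compA
    ?w1 ?w2 ?w1' ?w2'.
exists X, (comp p w').
apply: (Ex_iso (a := idm A') (b := w) (c := idm X) hp); try exact: iso_idm.
- by exists w'.
- by rewrite w2 compm1.
- by rewrite comp1m -compA ww' compm1.
Qed.

Lemma Ex_coker (A B D D' : N) (j : Hom A B) (r : Hom B D) (q : Hom B D') :
  Ex j r -> is_cokernel j q -> Ex j q.
Proof.
move=> hr [hq hu].
have [_ [hr0 hru]] := Ex_kercoker hr.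
have [c [hc _]] := hru D' q hq.
have [c' [hc' _]] := hu D r hr0.
have c'c : comp c' c = idm D.
  by apply: (exists_unique_eq (hru D r hr0)); rewrite ?comp1m // -compA hc hc'.
have cc' : comp c c' = idm D'.
  by apply: (exists_unique_eq (hu D' q hq)); rewrite ?comp1m // -compA hc' hc.
apply: (Ex_iso (a := idm A) (b := idm B) (c := c) hr); try exact: iso_idm.
- by exists c'.
- by rewrite comp1m compm1.
- by rewrite hc compm1.
Qed.

Lemma bsum_pushout_zero (A B Z : N) (X : biprod_on A B) (i : Hom Z B) :
  is_zero Z -> is_pushout i (0 : Hom Z A) (bin1 X) (bin2 X).
Proof.
move=> hZ; split; first by rewrite (hom_from_zero i hZ) !compm0.
move=> Y u v _; exists (comp v (bpr1 X) + comp u (bpr2 X)); split; first by split; bsimp.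
by move=> w [h1 h2]; apply: bsum_hom_ext; bsimp; rewrite ?h1 ?h2.
Qed.

Lemma Ex_split (A B : N) (X : biprod_on A B) : Ex (bin1 X) (bpr2 X).
Proof.
have [Z [i hi]] := Ex_E0op B.
have [Y [p hp]] : adm_mono (bin1 X).
  apply: (adm_mono_pushout _ (bsum_pushout_zero X i (Ex_idm_ker_zero hi))).
  by exists B, (idm B).
apply: (Ex_coker hp); split; first exact: bpr2_in1.
move=> Y' g hg; exists (comp g (bin2 X)); split.
  by apply: bsum_hom_ext; bsimp; rewrite ?hg.
by move=> h <-; bsimp.
Qed.

Lemma bmap_idm_pushout (A B C : N) (i : Hom A B) (SA : biprod_on A C) (SB : biprod_on B C) :
  is_pushout i (bin1 SA) (bmap SA SB i (idm C)) (bin1 SB).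
Proof.
split; first by rewrite bmap_in1.
move=> X u v huv.
exists (comp u (bpr1 SB) + comp (comp v (bin2 SA)) (bpr2 SB)); split.
  by split; [bsimp | apply: bsum_hom_ext; rewrite /bmap; bsimp; rewrite ?huv].
move=> w [h1 h2]; apply: bsum_hom_ext; bsimp; first by rewrite h1.
by rewrite -h2 /bmap; bsimp.
Qed.

(* The direct sum of two conflations is the composite of i (+) 1 and 1 (+) i',
   both pushouts of admissible monomorphisms. *)
Lemma Ex_bmap (A B D A' B' D' : N) (i : Hom A B) (p : Hom B D) (i' : Hom A' B')
  (p' : Hom B' D') (SA : biprod_on A A') (SB : biprod_on B B') (SD : biprod_on D D') :
  Ex i p -> Ex i' p' -> Ex (bmap SA SB i i') (bmap SB SD p p').
Proof.
move=> hp hp'.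
pose M := chosen_biprod B A'.
have h1 : adm_mono (bmap SA M i (idm A')).
  by apply: (adm_mono_pushout _ (bmap_idm_pushout i SA M)); exists D, p.
have h2 : adm_mono (bmap M SB (idm B) i').
  rewrite -bmap_flip; apply: (adm_mono_pushout _ (bmap_idm_pushout i' (bflip M) (bflip SB))).
  by exists D', p'.
have [X [r hr]] := Ex_E1 h1 h2.
rewrite bmap_comp comp1m compm1 in hr.
have [[hpi _] [_ hpu]] := Ex_kercoker hp.
have [[hpi' _] [_ hpu']] := Ex_kercoker hp'.
apply: (Ex_coker hr); split; first by rewrite bmap_comp hpi hpi' /bmap; bsimp.
move=> Y g hg.
have hg1 : comp (comp g (bin1 SB)) i = 0.
  by rewrite -compA -(bmap_in1 SA SB i i') compA hg comp0m.
have hg2 : comp (comp g (bin2 SB)) i' = 0.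
  by rewrite -compA -(bmap_in2 SA SB i i') compA hg comp0m.
have [k1 [ek1 U1]] := hpu Y _ hg1.
have [k2 [ek2 U2]] := hpu' Y _ hg2.
exists (comp k1 (bpr1 SD) + comp k2 (bpr2 SD)); split.
  by apply: bsum_hom_ext; rewrite /bmap; bsimp; rewrite ?ek1 ?ek2.
move=> h hh; apply: bsum_hom_ext; bsimp.
  by apply: U1; rewrite -hh /bmap; bsimp.
by apply: U2; rewrite -hh /bmap; bsimp.
Qed.

Definition dsum_obj (G H : nat -> N) (n : nat) : N := bsum (chosen_biprod (G n) (H n)).

Definition dsum_diff (G H : nat -> N) (a : diffs G) (b : diffs H) : diffs (dsum_obj G H) :=
  fun n => bmap _ _ (a n) (b n).

Definition gcx_dsum (X Y : gcx N) : gcx N :=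
  Gcx (dsum_diff (dtop X) (dtop Y)) (dsum_diff (dbot X) (dbot Y)).

Lemma acyclic_dsum (G H : nat -> N) (a : diffs G) (b : diffs H) :
  acyclic a -> acyclic b -> acyclic (dsum_diff a b).
Proof.
move=> [J [e [m [hJ0 hd hEx]]]] [J' [e' [m' [hJ0' hd' hEx']]]].
pose JJ n := chosen_biprod (J n) (J' n).
exists (fun n => bsum (JJ n)), (fun n => bmap _ (JJ n) (e n) (e' n)),
  (fun n => bmap (JJ n.+1) _ (m n) (m' n)).
split=> [|n|n]; first exact: bsum_zero.
- by rewrite /dsum_diff bmap_comp -hd -hd'.
- exact: Ex_bmap.
Qed.

Lemma supported_on_dsum (k : nat) (G H : nat -> N) :
  supported_on k G -> supported_on k H -> supported_on k (dsum_obj G H).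
Proof. by move=> hG hH n hn; apply: bsum_zero; [apply: hG | apply: hH]. Qed.

Lemma bac_dsum (k : nat) (X Y : gcx N) : bac k X -> bac k Y -> bac k (gcx_dsum X Y).
Proof.
case=> hsX htX hbX [hsY htY hbY].
by split; [apply: supported_on_dsum | apply: acyclic_dsum ..].
Qed.

Lemma B1_hom_dsum (V : zmodType) (k : nat) (f : gcx N -> V) (X Y : gcx N) :
  B1_hom k f -> bac k X -> bac k Y -> f (gcx_dsum X Y) = f X + f Y.
Proof.
move=> hf hX hY; pose S n := chosen_biprod (gobj X n) (gobj Y n).
apply: (hf X (gcx_dsum X Y) Y (fun n => bin1 (S n)) (fun n => bpr2 (S n)) hX (bac_dsum hX hY) hY).
- by split=> n; rewrite /= /dsum_diff bmap_in1.
- by split=> n; rewrite /= /dsum_diff bpr2_bmap.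
- by move=> n; apply: Ex_split.
Qed.

Lemma L1_hom_swap_top (V : zmodType) (k : nat) (f : gcx N -> V) (G : nat -> N)
  (a b : diffs G) (c c' : diffs (dsum_obj G G)) :
  L1_hom k f -> supported_on k G ->
  acyclic a -> acyclic b -> acyclic c -> acyclic c' ->
  f (Gcx (dsum_diff b a) c) - f (Gcx (dsum_diff a b) c) =
  f (Gcx (dsum_diff b a) c') - f (Gcx (dsum_diff a b) c').
Proof.
move=> [_ hL] hG ha hb hc hc'.
have hS := supported_on_dsum hG hG.
have hab := acyclic_dsum ha hb; have hba := acyclic_dsum hb ha.
have swap_chain : is_chain (dsum_diff a b) (dsum_diff b a) (fun n => bswap _).
  by move=> n; rewrite /dsum_diff bswap_bmap.
have idm_invol n : is_involution (idm (dsum_obj G G n)) by rewrite /is_involution comp1m.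
have idm_chain (e : diffs (dsum_obj G G)) : is_chain e e (fun n => idm _).
  by move=> n; rewrite comp1m compm1.
rewrite (hL _ _ _ _ _ _ _ (And3 hS hab hc) (And3 hS hba hc) (fun n => bswap_invol _)
  idm_invol swap_chain (idm_chain c)).
by rewrite (hL _ _ _ _ _ _ _ (And3 hS hab hc') (And3 hS hba hc') (fun n => bswap_invol _)
  idm_invol swap_chain (idm_chain c')).
Qed.

End ExactCategory.

Theorem lemma3p2 (N : exactCat) (k : nat) (hk : (1 <= k)%N)
  (P : gcx N) (hP : bac k P) :
  forall (V : zmodType) (f : gcx N -> V), L1_hom k f -> f (sw P) = - f P.
Proof.
move=> V f hf; have [[hB hD] _] := hf.
case: P hP => G d d' hP; have [hG hd hd'] := hP.
have hswP : bac k (sw (Gcx d d')) by [].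
have hdd : bac k (Gcx d d) by [].
have hd'd' : bac k (Gcx d' d') by [].
have E : f (gcx_dsum (Gcx d' d') (Gcx d d)) - f (gcx_dsum (Gcx d d') (sw (Gcx d d')))
       = f (gcx_dsum (sw (Gcx d d')) (Gcx d d)) - f (gcx_dsum (Gcx d d) (sw (Gcx d d'))).
  exact: L1_hom_swap_top hf hG hd hd' (acyclic_dsum hd' hd) (acyclic_dsum hd hd).
rewrite (hD _ (bac_dsum hd'd' hdd) (fun=> erefl)) sub0r in E.
rewrite !(B1_hom_dsum hB) // (hD _ hdd (fun=> erefl)) addr0 add0r subrr in E.
by move/eqP: E; rewrite oppr_eq0 addr_eq0 => /eqP ->; rewrite opprK.
Qed.
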